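(* Let $k$ be a positive integer and let $a/b$ be a vertex of $\mathcal F_k$ with $|a|+|b|>k$. Then every neighbor $x/y$ of $a/b$ in $\mathcal F_k$ is comparable to $a/b$, i.e. $a/b\prec x/y$ or $x/y\prec a/b$.
   Context: The vertex set $V$ consists of all reduced fractions $p/q$ with $p,q\in\mathbb Z$, $\gcd(p,q)=1$, together with $1/0$; here $p/q$ and $(-p)/(-q)$ denote the same vertex. For vertices define $d(p/q,a/b)=|pb-qa|$. The graph $\mathcal F_k$ has vertex set $V$, with an edge between $p/q$ and $a/b$ exactly when $d(p/q,a/b)=k$. Write $a/b\prec p/q$ when $a/b$ and $p/q$ are adjacent in $\mathcal F_k$ and $|a|\le|p|$ and $|b|\le|q|$. *)

From Stdlib Require Import ZArith.
Open Scope Z_scope.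

(* A vertex p/q of F_k is represented by a pair (p, q) of integers with
   gcd(p,q) = 1 (this includes 1/0 and excludes 0/0).  The identification
   p/q = (-p)/(-q) is harmless: every notion below (d, adjacency, |.|)
   is invariant under simultaneous sign change. *)
Definition is_vertex (p q : Z) : Prop := Z.gcd p q = 1.

Definition dist (p q a b : Z) : Z := Z.abs (p * b - q * a).

Definition adjacent (k p q a b : Z) : Prop := dist p q a b = k.

Definition prec (k a b p q : Z) : Prop :=
  adjacent k a b p q /\ Z.abs a <= Z.abs p /\ Z.abs b <= Z.abs q.

From Stdlib Require Import ZArith Lia.
Open Scope Z_scope.

(* With A = |a|, B = |b|, X = |x|, Y = |y|, the reverse triangle inequality
   gives |A Y - B X| <= |a y - b x| = k < A + B.  If the neighbour were
   incomparable, say A < X and Y < B, then B X - A Y >= B (A + 1) - A (B - 1)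
   = A + B, a contradiction. *)

Lemma dist_sym (p q a b : Z) : dist p q a b = dist a b p q.
Proof. unfold dist; rewrite <- Z.abs_opp; f_equal; ring. Qed.

Lemma abs_abs_sub_le (u v : Z) : Z.abs (Z.abs u - Z.abs v) <= Z.abs (u - v).
Proof.
  pose proof (Z.abs_sub_triangle u v).
  pose proof (Z.abs_sub_triangle v u).
  replace (v - u) with (- (u - v)) in * by ring.
  rewrite Z.abs_opp in *; lia.
Qed.

Lemma cross_ge_of_incomparable (A B X Y : Z) :
  0 <= A -> 0 <= B -> A < X -> Y < B -> A + B <= B * X - A * Y.
Proof. intros; nia. Qed.

Lemma comparable_of_small_cross (A B X Y : Z) :
  0 <= A -> 0 <= B -> Z.abs (A * Y - B * X) < A + B ->
  (A <= X /\ B <= Y) \/ (X <= A /\ Y <= B).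
Proof.
  intros HA HB Hcross.
  destruct (Z.lt_ge_cases A X), (Z.lt_ge_cases Y B), (Z.lt_ge_cases B Y); try lia.
  - pose proof (cross_ge_of_incomparable A B X Y HA HB); lia.
  - pose proof (cross_ge_of_incomparable B A Y X HB HA); lia.
Qed.

Theorem lemma4p5 (k a b x y : Z) :
  0 < k ->
  is_vertex a b -> is_vertex x y ->
  Z.abs a + Z.abs b > k ->
  adjacent k a b x y ->
  prec k a b x y \/ prec k x y a b.
Proof.
  intros _ _ _ Hsum Hadj.
  assert (Hadj' : adjacent k x y a b) by (unfold adjacent; rewrite dist_sym; exact Hadj).
  assert (Hcross : Z.abs (Z.abs a * Z.abs y - Z.abs b * Z.abs x) < Z.abs a + Z.abs b).
  { pose proof (abs_abs_sub_le (a * y) (b * x)) as Hrev.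
    rewrite !Z.abs_mul in Hrev; unfold adjacent, dist in Hadj; lia. }
  unfold prec.
  destruct (comparable_of_small_cross _ _ _ _ (Z.abs_nonneg a) (Z.abs_nonneg b) Hcross)
    as [[Hx Hy] | [Hx Hy]].
  - left; auto.
  - right; auto.
Qed.
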